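(* Let $m \geq 0$, $n \geq 1$ be integers. For every $w = w_1 \cdots w_{m+n-1} \in \mathrm{Motz}_{m,n-1}$, the configuration $c(w)$ is a sorted deterministically recurrent configuration on $K_{m,n}^0$, and $\Xi(\Phi(c(w))) = w$. Consequently, $w \mapsto c(w)$ is the bijection $\Phi^{-1} \circ \Xi^{-1}$ from $\mathrm{Motz}_{m,n-1}$ to the set of sorted deterministically recurrent configurations on $K_{m,n}^0$.
   Context: $K_{m,n}^0$ is the complete bipartite graph with ''top'' vertices $v^t_0, \ldots, v^t_m$ and ''bottom'' vertices $v^b_1, \ldots, v^b_n$, with an edge between every top and every bottom vertex; $v^t_0$ is the sink. A configuration is a vector $c = (c^t_1, \ldots, c^t_m; c^b_1, \ldots, c^b_n)$ of non-negative integers; it is sorted if $c^t$, $c^b$ are weakly increasing, stable if $c^t_i < n$ and $c^b_j < m+1$ for all $i,j$. Abelian sandpile model (ASM): an unstable non-sink vertex topples by sending one grain to each neighbour (bottom vertices also to the sink); grains sent to the sink disappear. In the Markov chain on stable configurations which adds a grain to a uniformly random non-sink vertex and stabilises by the ASM, a stable configuration is deterministically recurrent if it is a recurrent state. Labelled Motzkin paths: words in steps $U=(1,1)$, $D=(1,-1)$ and horizontal steps $H^N, H^E$ (both $=(1,0)$), starting and ending at height $0$ and never going below the $x$-axis. $\mathrm{Motz}_{m,n-1}$ is the set of such paths with $m+n-1$ steps, exactly $m$ of which are $U$ or $H^E$ (equivalently exactly $n-1$ are $D$ or $H^N$). For $w \in \mathrm{Motz}_{m,n-1}$, $c(w) =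 (c^t; c^b)$ is defined by: for $i \in \{1,\ldots,m\}$, if $w_j$ is the $i$-th step of $w$ belonging to $\{D, H^E\}$, then $c^t_i := |\{ j' < j : w_{j'} \in \{U, H^N\}\}|$; for $j \in \{1,\ldots,n-1\}$, if $w_i$ is the $j$-th step of $w$ belonging to $\{D, H^N\}$, then $c^b_j := |\{ i' < i : w_{i'} \in \{U, H^E\}\}|$; and $c^b_n := m$. A parallelogram polyomino in the box $[0,m+1]\times[0,n]$ is the set of unit cells between two lattice paths $\mathcal{U}$ (upper) and $\mathcal{L}$ (lower) from $(0,0)$ to $(m+1,n)$ with steps $N=(0,1)$, $E=(1,0)$, meeting only at their endpoints; necessarily $\mathcal{U} = (N, u_1, \ldots, u_{m+n-1}, E)$ and $\mathcal{L} = (E, \ell_1, \ldots, \ell_{m+n-1}, N)$. The map $\Xi$ sends such a polyomino to $w_1 \cdots w_{m+n-1}$ with $w_i = U$ if $(u_i,\ell_i) = (N,E)$, $w_i = H^N$ if $(u_i,\ell_i)=(N,N)$, $w_i = H^E$ if $(u_i,\ell_i) = (E,E)$, $w_i = D$ if $(u_i,\ell_i) = (E,N)$; it is known to be a bijection onto $\mathrm{Motz}_{m,n-1}$. The Dukes–Le Borgne map $\Phi$: for a sorted stable $c$, $\mathcal{U}(c^t)$ is the path from $(0,0)$ to $(m+1,n)$ whose $E$ steps occur at heights $1+c^t_1, \ldots, 1+c^t_m, n$, and $\mathcal{L}(c^b)$ the path from $(0,0)$ to $(m+1,n)$ whose $N$ steps occur at $x$-coordinates $1+c^b_1, \ldots,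 1+c^b_n$; $\Phi(c)$ is the polyomino between them. It is known that $\Phi$ is a bijection from sorted deterministically recurrent configurations on $K_{m,n}^0$ to parallelogram polyominoes in $[0,m+1]\times[0,n]$. *)

From mathcomp Require Import all_boot.
Set Implicit Arguments.
Unset Strict Implicit.
Unset Printing Implicit Defensive.

Inductive rtc (T : Type) (R : T -> T -> Prop) : T -> T -> Prop :=
| rtc_refl x : rtc R x x
| rtc_step x y z : R x y -> rtc R y z -> rtc R x z.

(** * Configurations on K_{m,n}^0
    A configuration is a pair (ct, cb) with ct = [c^t_1; ...; c^t_m]
    and cb = [c^b_1; ...; c^b_n] (0-indexed lists). *)
Definition config := (seq nat * seq nat)%type.

Definition stable (m n : nat) (c : config) : Prop :=
  [/\ size c.1 = m, size c.2 = n,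
      all (fun x => x < n) c.1 & all (fun x => x < m.+1) c.2].

Definition sorted_config (c : config) : Prop :=
  sorted leq c.1 /\ sorted leq c.2.

(** Top vertex v^t_{i+1} (degree n) sends one grain to every bottom vertex;
    bottom vertex v^b_{j+1} (degree m+1) sends one grain to every top vertex,
    the grain sent to the sink v^t_0 disappearing. *)
Definition topple_step (m n : nat) (c c' : config) : Prop :=
  (exists2 i, i < m &
     n <= nth 0 c.1 i /\ c' = (set_nth 0 c.1 i (nth 0 c.1 i - n), map S c.2))
  \/
  (exists2 j, j < n &
     m.+1 <= nth 0 c.2 j /\ c' = (map S c.1, set_nth 0 c.2 j (nth 0 c.2 j - m.+1))).

Definition stabilises (m n : nat) (c c' : config) : Prop :=
  rtc (topple_step m n) c c' /\ stable m n c'.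

Definition add_top (i : nat) (c : config) : config :=
  (set_nth 0 c.1 i (nth 0 c.1 i).+1, c.2).
Definition add_bot (j : nat) (c : config) : config :=
  (c.1, set_nth 0 c.2 j (nth 0 c.2 j).+1).

(** Positive-probability transitions of the Markov chain on stable
    configurations: add a grain to some non-sink vertex and stabilise. *)
Definition chain_step (m n : nat) (c c' : config) : Prop :=
  stable m n c /\
  ((exists2 i, i < m & stabilises m n (add_top i c) c') \/
   (exists2 j, j < n & stabilises m n (add_bot j c) c')).

(** Recurrent state of the (finite) Markov chain:
    every state reachable from c can reach c back. *)
Definition recurrent (m n : nat) (c : config) : Prop :=
  stable m n c /\
  forall c', rtc (chain_step m n) c c' -> rtc (chain_step m n) c' c.

Inductive stp := U | D | HN | HE.

Definition isU (s : stp) := if s is U then true else false.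
Definition isD (s : stp) := if s is D then true else false.
Definition isUHN (s : stp) := match s with U | HN => true | _ => false end.
Definition isUHE (s : stp) := match s with U | HE => true | _ => false end.
Definition isDHN (s : stp) := match s with D | HN => true | _ => false end.
Definition isDHE (s : stp) := match s with D | HE => true | _ => false end.

Definition motz (m k : nat) (w : seq stp) : Prop :=
  [/\ size w = m + k, count isUHE w = m,
      count isU w = count isD w &
      forall j, count isD (take j w) <= count isU (take j w)].

Definition stat_list (P Q : pred stp) (w : seq stp) : seq nat :=
  [seq count Q (take j w) | j <- iota 0 (size w) & P (nth U w j)].

Definition cfg_of (m : nat) (w : seq stp) : config :=
  (stat_list isDHE isUHN w, rcons (stat_list isDHN isUHE w) m).

Inductive dir := dN | dE.
Definition isN (d : dir) := if d is dN then true else false.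
Definition isE (d : dir) := if d is dE then true else false.

Definition lattice_path (m n : nat) (s : seq dir) : Prop :=
  size s = m.+1 + n /\ count isE s = m.+1.

Definition pt (s : seq dir) (k : nat) : nat * nat :=
  (count isE (take k s), count isN (take k s)).

(** A parallelogram polyomino in [0,m+1]x[0,n], given by its pair
    (upper path, lower path). *)
Definition parallelogram (m n : nat) (p : seq dir * seq dir) : Prop :=
  [/\ lattice_path m n p.1, lattice_path m n p.2,
      (forall k, count isN (take k p.2) <= count isN (take k p.1)) &
      (forall k1 k2, 0 < k1 < size p.1 -> 0 < k2 < size p.2 ->
         pt p.1 k1 <> pt p.2 k2)].

Fixpoint steps_gen (a b : dir) (prev : nat) (hs : seq nat) (top : nat)
  : seq dir :=
  match hs with
  | [::] => nseq (top - prev) a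
  | h :: hs' => nseq (h - prev) a ++ b :: steps_gen a b h hs' top
  end.

Definition Upath (n : nat) (ct : seq nat) : seq dir :=
  steps_gen dN dE 0 (rcons (map S ct) n) n.
Definition Lpath (m : nat) (cb : seq nat) : seq dir :=
  steps_gen dE dN 0 (map S cb) m.+1.

Definition Phi (m n : nat) (c : config) : seq dir * seq dir :=
  (Upath n c.1, Lpath m c.2).

Definition stp_of (ul : dir * dir) : stp :=
  match ul with
  | (dN, dE) => U
  | (dN, dN) => HN
  | (dE, dE) => HE
  | (dE, dN) => D
  end.

Definition inner (s : seq dir) : seq dir := take (size s).-2 (behead s).

Definition Xi (p : seq dir * seq dir) : seq stp :=
  [seq stp_of ul | ul <- zip (inner p.1) (inner p.2)].

From mathcomp Require Import all_boot zify.
Set Implicit Arguments. Unset Strict Implicit. Unset Printing Implicit Defensive.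

(* The letters of a Motzkin word record the pairs of steps of the upper and lower paths
   of a parallelogram polyomino, and c(w) lists, for each E step of the upper path
   (resp. N step of the lower path), the number of earlier N (resp. E) steps: these are
   exactly the heights from which Phi rebuilds the two paths, so Xi (Phi (c w)) = w.
   Recurrence is decided by Dhar's burning criterion: a stable configuration is recurrent
   iff it has no forbidden subconfiguration. For c(w), a forbidden set would push the lower
   path above the upper one on some prefix, which the Motzkin condition forbids; conversely
   the two paths encoded by a sorted configuration without forbidden set zip to a Motzkin
   word. *)

Lemma sorted_path0 (s : seq nat) : sorted leq s -> path leq 0 s.
Proof. by case: s. Qed.

Lemma count_iota_le_count_nth (s : seq nat) (A p : pred nat) :
  (forall i, i < size s -> A i -> p (nth 0 s i)) -> count A (iota 0 (size s)) <= count p s.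
Proof.
move=> H; rewrite -{2}(mkseq_nth 0 s) /mkseq count_map.
have -> : count A (iota 0 (size s)) = count (fun i => A i && (i < size s)) (iota 0 (size s)).
  by apply: eq_in_count => i; rewrite mem_iota add0n => /andP[_ ->]; rewrite andbT.
by apply: sub_count => i /andP[Ai Hi]; apply: H.
Qed.

Lemma count_ltn_iota a N : count (fun i => i < a) (iota 0 N) = minn a N.
Proof.
elim: N => [|N IH]; first by rewrite minn0.
by rewrite -addn1 iotaD count_cat IH /= add0n addn0; case: ltnP => H; lia.
Qed.

Lemma count_predU1 (s : seq nat) (P : pred nat) k : uniq s -> k \in s ->
  count (predU1 k P) s = count P s + ~~ P k.
Proof.
elim: s => //= x s IH /andP[xs us]; rewrite inE => /predU1P[->|ks].
  rewrite eqxx /= (@eq_in_count _ _ P) => [|i Hi]; first by case: (P x) => /=; lia.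
  by rewrite /=; case: eqP => // ix; rewrite -ix Hi in xs.
by rewrite IH //; case: eqP => [xk|_]; [rewrite xk ks in xs | lia].
Qed.

Lemma count_predD1 (s : seq nat) (P : pred nat) k : uniq s -> k \in s ->
  count (predD1 P k) s + P k = count P s.
Proof.
elim: s => //= x s IH /andP[xs us]; rewrite inE => /predU1P[->|ks].
  rewrite eqxx /= (@eq_in_count _ _ P) => [|i Hi]; first by rewrite add0n addnC.
  by rewrite !inE; case: eqP => [ix|//]; rewrite -ix Hi in xs.
by rewrite -IH //=; case: eqP => [xk|_]; [rewrite xk ks in xs | rewrite /= addnA].
Qed.

Lemma nth_mapS (s : seq nat) k :
  nth 0 (map S s) k = if k < size s then (nth 0 s k).+1 else 0.
Proof. by case: ltnP => H; [rewrite (nth_map 0) | rewrite nth_default ?size_map]. Qed.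

Lemma nth_set_nth0 (s : seq nat) i a k :
  nth 0 (set_nth 0 s i a) k = if k == i then a else nth 0 s k.
Proof. by rewrite nth_set_nth. Qed.

Lemma sumn_mapS (s : seq nat) : sumn (map S s) = sumn s + size s.
Proof. by elim: s => //= x s ->; rewrite addnS addSn addnA. Qed.

Lemma nth_le_sumn (s : seq nat) i : nth 0 s i <= sumn s.
Proof.
by elim: s i => [|x s IH] [|i] //=; rewrite ?leq_addr // (leq_trans (IH i)) ?leq_addl.
Qed.

Lemma count_flatten_nseq (T : eqType) (f : nat -> nat) (g : nat -> T) N v :
  count_mem v (flatten [seq nseq (f i) (g i) | i <- iota 0 N]) =
  sumn [seq (g i == v) * f i | i <- iota 0 N].
Proof.
by rewrite count_flatten -map_comp; congr sumn; apply: eq_map => i /=; rewrite count_nseq.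
Qed.

Lemma sumn_iota_eq (f : nat -> nat) N k :
  sumn [seq (i == k) * f i | i <- iota 0 N] = (k < N) * f k.
Proof.
elim: N => // N IH; rewrite -addn1 iotaD map_cat sumn_cat IH /= add0n addn0 addn1 ltnS.
by case: (ltngtP k N) => [lt|gt|->]; rewrite ?eqxx ?mul0n ?mul1n ?addn0 // eq_sym;
  rewrite ?(ltn_eqF lt) ?(gtn_eqF gt) ?mul0n ?addn0.
Qed.

Lemma inl_eqE (a b : nat) : (inl a == inl b :> nat + nat) = (a == b). Proof. by []. Qed.

Lemma inr_eqE (a b : nat) : (inr a == inr b :> nat + nat) = (a == b). Proof. by []. Qed.

Section ReflexiveTransitiveClosure.
Variables (T : Type) (R : T -> T -> Prop) (I : T -> Prop).

Lemma rtc_trans x y z : rtc R x y -> rtc R y z -> rtc R x z.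
Proof. by elim=> // a b c Hab _ IH Hcz; apply: rtc_step Hab (IH Hcz). Qed.

Lemma rtc1 x y : R x y -> rtc R x y.
Proof. by move=> Hxy; apply: rtc_step Hxy (rtc_refl _ _). Qed.

Hypothesis R_inv : forall x y, I x -> R x y -> I y.

Hypothesis R_diamond : forall x y z, I x -> R x y -> R x z ->
  y = z \/ exists2 u, R y u & R z u.

Lemma rtc_normal_step x y : I x -> rtc R x y -> (forall y', ~ R y y') ->
  forall z, R x z -> rtc R z y.
Proof.
move=> + Hxy; elim: Hxy => [a _ Na z /Na //|a b c Hab Hbc IH Ia Nc z Haz].
case: (R_diamond Ia Hab Haz) => [<- //|[u Hbu Hzu]].
exact: rtc_step Hzu (IH (R_inv Ia Hab) Nc u Hbu).
Qed.

Lemma rtc_normal_confluent x y z : I x -> rtc R x y -> (forall y', ~ R y y') ->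
  rtc R x z -> rtc R z y.
Proof.
move=> Ix Hxy Ny Hxz; elim: Hxz Ix Hxy => // a b c Hab _ IH Ia Hay.
exact: IH (R_inv Ia Hab) (rtc_normal_step Ia Hay Ny Hab).
Qed.

End ReflexiveTransitiveClosure.

(** * Levels of lattice paths *)

Section Levels.
Variable a : pred dir.

(* [levels p s] is the inverse of [steps_gen]: for each step of [s] outside [a],
   the number of earlier [a]-steps, shifted by [p]. *)
Fixpoint levels (p : nat) (s : seq dir) : seq nat :=
  if s is x :: s' then
    if a x then levels p.+1 s' else p :: levels p s'
  else [::].

Lemma levels_ge s p : all (fun h => p <= h) (levels p s).
Proof.
elim: s p => //= x s IH p; case: (a x) => /=; last by rewrite leqnn IH.
by apply: sub_all (IH p.+1) => h /=; lia.
Qed.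

Lemma levels_le s p : all (fun h => h <= p + count a s) (levels p s).
Proof.
elim: s p => //= x s IH p; case: (a x) => /=.
  by apply: sub_all (IH p.+1) => h /=; lia.
by rewrite leq_addr; apply: sub_all (IH p) => h /=; lia.
Qed.

Lemma path_levels s p : path leq p (levels p s).
Proof.
elim: s p => //= x s IH p; case: (a x) => /=; last by rewrite leqnn IH.
by case: (levels p.+1 s) (IH p.+1) => //= h l /andP[Hh ->]; rewrite andbT ltnW.
Qed.

Lemma size_levels s p : size (levels p s) = count (predC a) s.
Proof. by elim: s p => //= x s IH p; case: (a x); rewrite /= IH. Qed.

Lemma levelsS s p : map S (levels p s) = levels p.+1 s.
Proof. by elim: s p => //= x s IH p; case: (a x); rewrite /= IH. Qed.

Lemma levels_cat s1 s2 p :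
  levels p (s1 ++ s2) = levels p s1 ++ levels (p + count a s1) s2.
Proof.
elim: s1 p => /= [|x s1 IH] p; first by rewrite addn0.
by case: (a x); rewrite /= IH ?addnS.
Qed.

Lemma levels_rcons s x p : levels p (rcons s x) =
  if a x then levels p s else rcons (levels p s) (p + count a s).
Proof. by rewrite -cats1 levels_cat /=; case: (a x); rewrite ?cats0 ?cats1. Qed.

Lemma nth_levels_le s p k i : i < count (predC a) (take k s) ->
  nth 0 (levels p s) i <= p + count a (take k s).
Proof.
move=> Hi; rewrite -{1}(cat_take_drop k s) levels_cat nth_cat size_levels Hi.
by move/(all_nthP 0): (levels_le (take k s) p) => /(_ i); rewrite size_levels; apply.
Qed.

Lemma count_levels_lt0 s p b : b <= p -> count (fun h => h < b) (levels p s) = 0.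
Proof.
move=> Hb; apply/eqP; rewrite -leqn0 leqNgt -has_count; apply/hasP => -[h Hh] /=.
by move/allP: (levels_ge s p) => /(_ h Hh); lia.
Qed.

(* The levels below [b] are those of the longest prefix staying below [b]. *)
Lemma count_levels_lt s p b : p < b -> exists k,
  count a (take k s) + p < b /\
  count (fun h => h < b) (levels p s) = count (predC a) (take k s).
Proof.
elim: s p => [|x s IH] p Hp /=; first by exists 0.
case Hx: (a x).
- case: (ltnP p.+1 b) => Hb.
    by have [k [H1 H2]] := IH _ Hb; exists k.+1; rewrite /= Hx /= H2; split=> //; lia.
  by exists 0; rewrite count_levels_lt0.
- have [k [H1 H2]] := IH _ Hp.
  by exists k.+1; rewrite /= Hx /= H2 Hp; split=> //; lia.
Qed.

Lemma count_levels_lt_take s p k b : b <= p + count a (take k s) ->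
  count (fun h => h < b) (levels p s) <= count (predC a) (take k s).
Proof.
elim: s p k => [|x s IH] p k Hb //.
case: k Hb => [|k] Hb; first by rewrite count_levels_lt0 // -(addn0 p).
move: Hb => /=; case Hx: (a x) => /= Hb; [apply: IH; lia | have := IH p k; lia].
Qed.

Section Encoding.
Variables (u v : dir).
Hypotheses (a_u : a u) (a_v : ~~ a v).
Hypotheses (a_eq_u : forall x, a x -> x = u) (a_eq_v : forall x, ~~ a x -> x = v).

Lemma steps_genS p hs top : all (fun h => p < h) hs -> p < top ->
  steps_gen u v p hs top = u :: steps_gen u v p.+1 hs top.
Proof.
case: hs => [|h hs] /= H1 H2; first by rewrite -subnSK.
by move/andP: H1 => [H1 _]; rewrite -subnSK.
Qed.

Lemma steps_gen_levels s p : steps_gen u v p (levels p s) (p + count a s) = s.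
Proof.
elim: s p => [|x s IH] p /=; first by rewrite addn0 subnn.
case Hx: (a x) => /=.
  by rewrite (a_eq_u Hx) steps_genS ?levels_ge // -?addSnnS ?IH //; lia.
by rewrite subnn /= add0n IH (a_eq_v (negbT Hx)).
Qed.

Lemma levels_steps_gen hs p top :
  path leq p hs -> all (fun h => h <= top) hs -> p <= top ->
  [/\ levels p (steps_gen u v p hs top) = hs,
      count a (steps_gen u v p hs top) = top - p &
      size (steps_gen u v p hs top) = size hs + (top - p)].
Proof.
have levels_nseq k r q : levels q (nseq k u ++ r) = levels (q + k) r.
  by elim: k q => [|k IH] q /=; rewrite ?addn0 // a_u IH addSnnS.
have count_u k : count a (nseq k u) = k by rewrite count_nseq a_u mul1n.
have av := negbTE a_v.
elim: hs p => [|h hs IH] p /=.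
  by move=> _ _ _; rewrite -(cats0 (nseq _ u)) levels_nseq cats0 count_u size_nseq.
move=> /andP[H1 H2] /andP[H3 H4] H5; have [E1 E2 E3] := IH h H2 H4 H3.
rewrite levels_nseq /= av count_cat count_u /= av size_cat size_nseq /= subnKC //.
by rewrite E1 E2 E3; split=> //; lia.
Qed.

End Encoding.
End Levels.

(** * Motzkin words and parallelogram polyominoes *)

Definition upper_dir (x : stp) : dir := if isUHN x then dN else dE.
Definition lower_dir (x : stp) : dir := if isUHE x then dE else dN.

Lemma zip_upper_lower w :
  [seq stp_of ul | ul <- zip (map upper_dir w) (map lower_dir w)] = w.
Proof. by elim: w => //= -[] w ->. Qed.

Lemma upper_dir_zip s1 s2 : size s1 = size s2 ->
  map upper_dir (map stp_of (zip s1 s2)) = s1.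
Proof. by elim: s1 s2 => [|x s1 IH] [|y s2] //= [/IH ->]; case: x; case: y. Qed.

Lemma lower_dir_zip s1 s2 : size s1 = size s2 ->
  map lower_dir (map stp_of (zip s1 s2)) = s2.
Proof. by elim: s1 s2 => [|x s1 IH] [|y s2] //= [/IH ->]; case: x; case: y. Qed.

Lemma count_upperN w : count isN (map upper_dir w) = count isUHN w.
Proof. by rewrite count_map; apply: eq_count => -[]. Qed.
Lemma count_upperE w : count isE (map upper_dir w) = count isDHE w.
Proof. by rewrite count_map; apply: eq_count => -[]. Qed.
Lemma count_lowerN w : count isN (map lower_dir w) = count isDHN w.
Proof. by rewrite count_map; apply: eq_count => -[]. Qed.
Lemma count_lowerE w : count isE (map lower_dir w) = count isUHE w.
Proof. by rewrite count_map; apply: eq_count => -[]. Qed.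

Lemma count_predCN s : count (predC isN) s = count isE s.
Proof. by apply: eq_count => -[]. Qed.
Lemma count_predCE s : count (predC isE) s = count isN s.
Proof. by apply: eq_count => -[]. Qed.
Lemma count_N_E s : count isN s + count isE s = size s.
Proof. by rewrite -count_predCN count_predC. Qed.

Lemma count_UHN_D w : count isUHN w + count isD w = count isDHN w + count isU w.
Proof. by elim: w => //= -[] w IH /=; lia. Qed.
Lemma count_DHE_U w : count isDHE w + count isU w = count isUHE w + count isD w.
Proof. by elim: w => //= -[] w IH /=; lia. Qed.
Lemma count_UHN_DHE w : count isUHN w + count isDHE w = size w.
Proof. by elim: w => //= -[] w IH /=; lia. Qed.
Lemma count_UHE_DHN w : count isUHE w + count isDHN w = size w.
Proof. by elim: w => //= -[] w IH /=; lia. Qed.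

Lemma motz_counts m k w : motz m k w ->
  [/\ count isUHN w = k, count isDHE w = m, count isDHN w = k & count isUHE w = m].
Proof.
move=> [Hsize HUHE HUD _].
have := count_UHN_D w; have := count_DHE_U w.
have := count_UHE_DHN w; split; lia.
Qed.

Lemma stat_list_levels (P Q : pred stp) (f : stp -> dir) (a : pred dir) :
  (forall x, P x = ~~ a (f x)) -> (forall x, Q x = a (f x)) ->
  forall w, stat_list P Q w = levels a 0 (map f w).
Proof.
move=> HP HQ w.
suff H p : [seq p + count Q (take j w) | j <- iota 0 (size w) & P (nth U w j)] =
           levels a p (map f w) by rewrite -H.
elim: w p => [|x w IH] p //=.
rewrite -[1]/(1 + 0) iotaDl filter_map /= HP.
rewrite (@eq_filter _ _ (fun j => P (nth U w j))) //.
case Hx: (a (f x)) => /=; rewrite -map_comp -IH ?addn0; [|congr cons];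
  by apply: eq_map => j /=; rewrite add0n HQ Hx /=; lia.
Qed.

Lemma cfg_of_levels m w : cfg_of m w =
  (levels isN 0 (map upper_dir w), rcons (levels isE 0 (map lower_dir w)) m).
Proof.
by rewrite /cfg_of (stat_list_levels (f := upper_dir) (a := isN))
  ?(stat_list_levels (f := lower_dir) (a := isE)) // => -[].
Qed.

Section MotzkinWord.
Variables (m n : nat) (w : seq stp).
Hypotheses (n_gt0 : 1 <= n) (w_motz : motz m (n - 1) w).

Let counts := motz_counts w_motz.

Lemma Upath_cfg_of : Upath n (cfg_of m w).1 = dN :: rcons (map upper_dir w) dE.
Proof.
have [cUHN _ _ _] := counts.
set P := dN :: _; rewrite cfg_of_levels /Upath /= levelsS.
have -> : rcons (levels isN 1 (map upper_dir w)) n = levels isN 0 P.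
  by rewrite /P /= levels_rcons /= count_upperN cUHN; congr rcons; lia.
have -> : n = 0 + count isN P.
  by rewrite /P /= -cats1 count_cat count_upperN cUHN /=; lia.
by apply: steps_gen_levels => // -[].
Qed.

Lemma Lpath_cfg_of : Lpath m (cfg_of m w).2 = dE :: rcons (map lower_dir w) dN.
Proof.
have [_ _ _ cUHE] := counts.
set P := dE :: _; rewrite cfg_of_levels /Lpath /= map_rcons levelsS.
have -> : rcons (levels isE 1 (map lower_dir w)) m.+1 = levels isE 0 P.
  by rewrite /P /= levels_rcons /= count_lowerE cUHE.
have -> : m.+1 = 0 + count isE P.
  by rewrite /P /= -cats1 count_cat count_lowerE cUHE /=; lia.
by apply: steps_gen_levels => // -[].
Qed.

Lemma Phi_cfg_of : Phi m n (cfg_of m w) =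
  (dN :: rcons (map upper_dir w) dE, dE :: rcons (map lower_dir w) dN).
Proof. by rewrite /Phi Upath_cfg_of Lpath_cfg_of. Qed.

Lemma Xi_Phi_cfg_of : Xi (Phi m n (cfg_of m w)) = w.
Proof.
have inner_rcons (s : seq dir) x y : inner (x :: rcons s y) = s.
  by rewrite /inner /= size_rcons -cats1 take_size_cat.
by rewrite Phi_cfg_of /Xi /= !inner_rcons zip_upper_lower.
Qed.

Lemma parallelogram_Phi_cfg_of : parallelogram m n (Phi m n (cfg_of m w)).
Proof.
have [cUHN cDHE cDHN cUHE] := counts; have [Hsize _ _ Hprefix] := w_motz.
have take_rcons k (s : seq dir) x : k <= size s -> take k (rcons s x) = take k s.
  by move=> Hk; rewrite -cats1 takel_cat.
rewrite Phi_cfg_of; split=> /=.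
- by rewrite /lattice_path /= size_rcons size_map -cats1 count_cat count_upperE /=; lia.
- by rewrite /lattice_path /= size_rcons size_map -cats1 count_cat count_lowerE /=; lia.
- case=> [|k] //=; case: (leqP k (size w)) => Hk.
    rewrite !take_rcons ?size_map // -!map_take count_upperN count_lowerN.
    by have := Hprefix k; have := count_UHN_D (take k w); lia.
  rewrite !take_oversize ?size_rcons ?size_map //.
  by rewrite -!cats1 !count_cat count_upperN count_lowerN /=; lia.
- move=> [|k1] [|k2] //=; rewrite !size_rcons !size_map => Hk1 Hk2.
  rewrite /pt /= !take_rcons ?size_map; try lia.
  rewrite -!map_take count_upperN count_upperE count_lowerN count_lowerE => -[E1 E2].
  have := count_UHN_DHE (take k1 w); have := count_UHE_DHN (take k2 w).
  rewrite !size_takel; try lia.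
  move=> F1 F2; have Ek : k1 = k2 by lia.
  by subst k2; have := Hprefix k1; have := count_DHE_U (take k1 w); lia.
Qed.

Lemma sorted_cfg_of : sorted_config (cfg_of m w).
Proof.
have [_ _ _ cUHE] := counts.
rewrite cfg_of_levels; split=> /=; first exact: path_sorted (path_levels _ _ _).
apply: (@path_sorted _ _ 0); rewrite rcons_path path_levels /=.
have := levels_le isE (map lower_dir w) 0; rewrite count_lowerE cUHE => /allP le_m.
by have := mem_last 0 (levels isE 0 (map lower_dir w)); rewrite inE => /predU1P[->|/le_m].
Qed.

Lemma stable_cfg_of : stable m n (cfg_of m w).
Proof.
have [cUHN cDHE cDHN cUHE] := counts.
have A1 := levels_le isN (map upper_dir w) 0; rewrite count_upperN cUHN in A1.
have A2 := levels_le isE (map lower_dir w) 0; rewrite count_lowerE cUHE in A2.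
rewrite cfg_of_levels; split=> /=.
- by rewrite size_levels count_predCN count_upperE.
- by rewrite size_rcons size_levels count_predCE count_lowerN cDHN; lia.
- by apply: sub_all A1 => h /=; lia.
- by rewrite all_rcons ltnSn; apply: sub_all A2 => h /=; lia.
Qed.

End MotzkinWord.

(** * Forbidden subconfigurations *)

(* A forbidden subconfiguration of [c] is a nonempty set of top vertices [At] and
   bottom vertices [Ab] in which every vertex has fewer grains than neighbours in the
   set; by Dhar's burning criterion, a stable configuration is recurrent iff it has none. *)
Definition fsc (c : config) (At Ab : pred nat) : Prop :=
  [/\ has At (iota 0 (size c.1)) || has Ab (iota 0 (size c.2)),
      forall i, i < size c.1 -> At i -> nth 0 c.1 i < count Ab (iota 0 (size c.2)) &
      forall j, j < size c.2 -> Ab j -> nth 0 c.2 j < count At (iota 0 (size c.1))].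

Definition fsc_free (c : config) := forall At Ab, ~ fsc c At Ab.

(* With a := |At| and b := |Ab|, at least a top heights are below b and at least b bottom
   heights below a. On the prefix of w on which the upper path stays below height b, the
   Motzkin condition keeps the lower path below the upper one, leaving fewer than b bottom
   heights below a. *)
Lemma fsc_free_cfg_of m n w : 1 <= n -> motz m (n - 1) w -> fsc_free (cfg_of m w).
Proof.
move=> Hn Hw At Ab.
have [_ cDHE cDHN _] := motz_counts Hw; have [_ _ _ Hprefix] := Hw.
rewrite cfg_of_levels /fsc /= size_rcons !size_levels count_predCN count_predCE
  count_upperE count_lowerN cDHE cDHN subn1 prednK //.
set su := map upper_dir w; set sl := map lower_dir w.
set a := count At (iota 0 m); set b := count Ab (iota 0 n).
case=> nonempty Htop Hbot.
have a_le_m : a <= m by rewrite -[m in _ <= m](size_iota 0 m) count_size.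
have a_le : a <= count (fun h => h < b) (levels isN 0 su).
  have := @count_iota_le_count_nth (levels isN 0 su) At (fun h => h < b).
  by rewrite size_levels count_predCN count_upperE cDHE; apply.
have b_le : b <= count (fun h => h < a) (levels isE 0 sl).
  have := @count_iota_le_count_nth (rcons (levels isE 0 sl) m) Ab (fun h => h < a).
  rewrite size_rcons size_levels count_predCE count_lowerN cDHN subn1 prednK //.
  by move=> /(_ Hbot); rewrite -cats1 count_cat /=; lia.
have b_gt0 : 0 < b.
  rewrite lt0n; apply/eqP => b0; move: nonempty; rewrite [has Ab _]has_count -/b b0 orbF.
  by case/hasP=> i; rewrite mem_iota => /andP[_ Hi] /(Htop _ Hi); rewrite b0.
have [k [Hk cnt_b]] := count_levels_lt isN su b_gt0.
have Hdom : count isN (take k sl) <= count isN (take k su).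
  rewrite /sl /su -!map_take count_upperN count_lowerN.
  by have := Hprefix k; have := count_UHN_D (take k w); lia.
have same_size : size (take k sl) = size (take k su) by rewrite !size_take !size_map.
have := count_N_E (take k sl); have := count_N_E (take k su).
rewrite count_predCN in cnt_b.
have := @count_levels_lt_take isE sl 0 k a; rewrite count_predCE; lia.
Qed.

Lemma fsc_free_last_bot m n t b x : 1 <= n -> sorted leq (rcons b x) ->
  stable m n (t, rcons b x) -> fsc_free (t, rcons b x) -> x = m.
Proof.
move=> Hn sorted_b [/= size_t size_b t_lt b_lt] free.
move: b_lt; rewrite all_rcons => /andP[x_le _].
case: (ltnP x m) => [x_lt_m|]; last by lia.
case: (free predT predT); split=> /=; rewrite ?count_predT ?size_iota ?size_b ?size_t.
- by case: (n) Hn => // n' _; rewrite orbT.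
- by move=> i Hi _; move/(all_nthP 0): t_lt; apply; rewrite size_t.
- move=> j Hj _; apply: leq_ltn_trans x_lt_m.
  have := sorted_leq_nth leq_trans leqnn 0 sorted_b.
  move: size_b; rewrite size_rcons => size_b /(_ j (size b)).
  by rewrite [nth _ _ (size b)]nth_rcons ltnn eqxx; apply; rewrite ?inE /=; lia.
Qed.

Section Reconstruction.
Variables (m n : nat) (t b : seq nat).
Hypotheses (n_gt0 : 1 <= n) (sorted_t : sorted leq t) (sorted_b : sorted leq b).
Hypotheses (stable_c : stable m n (t, rcons b m)) (free_c : fsc_free (t, rcons b m)).

Let su := steps_gen dN dE 0 t (n - 1).
Let sl := steps_gen dE dN 0 b m.
Let w := map stp_of (zip su sl).

Let size_t : size t = m. Proof. by case: stable_c. Qed.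
Let size_b : size b = n - 1.
Proof. by case: stable_c => _ /=; rewrite size_rcons; lia. Qed.

Let su_spec : [/\ levels isN 0 su = t, count isN su = n - 1 & size su = m + (n - 1)].
Proof.
have t_lt : all (fun h => h <= n - 1) t.
  by case: stable_c => _ _ t_lt _; apply: sub_all t_lt => h /=; lia.
have [] // := levels_steps_gen (a := isN) (u := dN) (v := dE) isT isT (sorted_path0 sorted_t) t_lt (leq0n (n - 1)).
by rewrite size_t subn0.
Qed.

Let sl_spec : [/\ levels isE 0 sl = b, count isE sl = m & size sl = n - 1 + m].
Proof.
have b_le : all (fun h => h <= m) b by case: stable_c => _ _ _; rewrite all_rcons => /andP[].
have [] // := levels_steps_gen (a := isE) (u := dE) (v := dN) isT isT (sorted_path0 sorted_b) b_le (leq0n m).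
by rewrite size_b subn0.
Qed.

Let upper_w : map upper_dir w = su.
Proof. by have [_ _ Hu] := su_spec; have [_ _ Hl] := sl_spec; rewrite upper_dir_zip // Hu Hl addnC. Qed.
Let lower_w : map lower_dir w = sl.
Proof. by have [_ _ Hu] := su_spec; have [_ _ Hl] := sl_spec; rewrite lower_dir_zip // Hu Hl addnC. Qed.

Lemma cfg_of_word : cfg_of m w = (t, rcons b m).
Proof.
by have [Lu _ _] := su_spec; have [Ll _ _] := sl_spec; rewrite cfg_of_levels upper_w lower_w Lu Ll.
Qed.

(* A prefix of [w] going below the axis would make the first [Eu] top vertices and
   the first [Nl] bottom vertices a forbidden subconfiguration. *)
Lemma word_prefix j : count isD (take j w) <= count isU (take j w).
Proof.
rewrite leqNgt; apply/negP => below.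
have [Lu cNu size_su] := su_spec; have [Ll cEl size_sl] := sl_spec.
have count_take (s : seq dir) p : count p (take j s) <= count p s.
  by rewrite -{2}(cat_take_drop j s) count_cat leq_addr.
set Eu := count isE (take j su); set Nu := count isN (take j su).
set El := count isE (take j sl); set Nl := count isN (take j sl).
have Nu_lt_Nl : Nu < Nl.
  rewrite /Nu /Nl -upper_w -lower_w -(map_take _ upper_dir) -(map_take _ lower_dir).
  by rewrite count_upperN count_lowerN; have := count_UHN_D (take j w); lia.
have Nl_le : Nl <= n - 1.
  by have := count_take sl isN; have := count_N_E sl; rewrite cEl size_sl; lia.
have Eu_le : Eu <= m.
  by have := count_take su isE; have := count_N_E su; rewrite cNu size_su; lia.
have El_Nl : El + Nl = Eu + Nu.
  have same_size : size (take j su) = size (take j sl).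
    by rewrite !size_take size_su size_sl addnC.
  by have := count_N_E (take j su); have := count_N_E (take j sl); lia.
case: (@free_c (fun i => i < Eu) (fun i => i < Nl)); split=> /=.
- by rewrite size_rcons size_b; apply/orP; right; apply/hasP; exists 0; rewrite ?mem_iota; lia.
- move=> i _ Hi; rewrite size_rcons size_b count_ltn_iota -Lu.
  by have := @nth_levels_le isN su 0 j i; rewrite count_predCN add0n => /(_ Hi); lia.
- move=> j' _ Hj'; rewrite size_t count_ltn_iota nth_rcons size_b ifT; last by lia.
  by have := @nth_levels_le isE sl 0 j j'; rewrite count_predCE add0n -Ll => /(_ Hj'); lia.
Qed.

Lemma motz_word : motz m (n - 1) w.
Proof.
have [_ cNu size_su] := su_spec; have [_ cEl size_sl] := sl_spec.
have cUHE : count isUHE w = m by rewrite -count_lowerE lower_w.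
split=> //; last exact: word_prefix.
- by rewrite size_map size_zip size_su size_sl addnC minnn.
- have := count_UHN_D w; have := count_N_E sl.
  by rewrite -count_upperN -count_lowerN upper_w lower_w cNu size_sl; lia.
Qed.
End Reconstruction.

Lemma cfg_of_surj m n c : 1 <= n -> sorted_config c -> stable m n c -> fsc_free c ->
  exists w, motz m (n - 1) w /\ cfg_of m w = c.
Proof.
case: c => t b' n_gt0 [/= sorted_t sorted_b'] stable_c free_c.
case/lastP: b' sorted_b' stable_c free_c => [|b x] sorted_b stable_c free_c.
  by case: stable_c => _ /=; lia.
have x_m := fsc_free_last_bot n_gt0 sorted_b stable_c free_c; subst x.
have sorted_b' : sorted leq b by case: (b) sorted_b => //= h s; rewrite rcons_path => /andP[].
by eexists; split; [apply: motz_word | apply: cfg_of_word].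
Qed.

(** * The sandpile model on K_{m,n}^0 *)

Section Sandpile.
Variables m n : nat.

Definition topple_top (i : nat) (c : config) : config :=
  (set_nth 0 c.1 i (nth 0 c.1 i - n), map S c.2).
Definition topple_bot (j : nat) (c : config) : config :=
  (map S c.1, set_nth 0 c.2 j (nth 0 c.2 j - m.+1)).

Definition sized (c : config) := size c.1 = m /\ size c.2 = n.

Ltac config_eq :=
  rewrite /topple_top /topple_bot /add_top /add_bot /=; f_equal;
  (apply: (@eq_from_nth _ 0);
   [ rewrite ?(size_set_nth, size_map); lia
   | let k := fresh "k" in let Hk := fresh "Hk" in move=> k Hk;
     rewrite ?(size_set_nth, size_map) in Hk;
     rewrite ?(nth_mapS, nth_set_nth0, size_set_nth, size_map);
     repeat (let H := fresh "H" in case: ifP => H; try (move/eqP: H => H; subst)); lia ]).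

Lemma topple_step_top c i : i < m -> n <= nth 0 c.1 i -> topple_step m n c (topple_top i c).
Proof. by left; exists i. Qed.

Lemma topple_step_bot c j : j < n -> m.+1 <= nth 0 c.2 j -> topple_step m n c (topple_bot j c).
Proof. by right; exists j. Qed.

Lemma topple_stepP c c' : topple_step m n c c' ->
  (exists i, [/\ i < m, n <= nth 0 c.1 i & c' = topple_top i c]) \/
  (exists j, [/\ j < n, m.+1 <= nth 0 c.2 j & c' = topple_bot j c]).
Proof. by case=> -[k Hk [H1 H2]]; [left | right]; exists k. Qed.

Lemma sized_topple c c' : sized c -> topple_step m n c c' -> sized c'.
Proof.
case=> S1 S2 /topple_stepP[[i [Hi _ ->]]|[j [Hj _ ->]]];
  by split; rewrite /= ?size_set_nth ?size_map ?S1 ?S2 //; lia.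
Qed.

Lemma stable_no_topple c c' : stable m n c -> ~ topple_step m n c c'.
Proof.
case=> S1 S2 S3 S4 /topple_stepP[[i [Hi Hni _]]|[j [Hj Hnj _]]].
- by move/(all_nthP 0): S3 => /(_ i); rewrite S1 => /(_ Hi); lia.
- by move/(all_nthP 0): S4 => /(_ j); rewrite S2 => /(_ Hj); lia.
Qed.

Lemma rtc_stable_eq c c' : stable m n c -> rtc (topple_step m n) c c' -> c' = c.
Proof. by move=> Sc H; case: H Sc => // a b c'' Hab _ /stable_no_topple/(_ Hab). Qed.

Lemma topple_diamond c c1 c2 : sized c -> topple_step m n c c1 -> topple_step m n c c2 ->
  c1 = c2 \/ exists2 d, topple_step m n c1 d & topple_step m n c2 d.
Proof.
case=> S1 S2 /topple_stepP[[i [Hi Hni ->]]|[j [Hj Hnj ->]]]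
  /topple_stepP[[i' [Hi' Hni' ->]]|[j' [Hj' Hnj' ->]]].
- case: (eqVneq i i') => [<-|Hne]; [by left | right].
  exists (topple_top i' (topple_top i c)).
    by apply: topple_step_top; rewrite //= nth_set_nth0 eq_sym (negbTE Hne).
  have -> : topple_top i' (topple_top i c) = topple_top i (topple_top i' c) by config_eq.
  by apply: topple_step_top; rewrite //= nth_set_nth0 (negbTE Hne).
- right; exists (topple_bot j' (topple_top i c)).
    by apply: topple_step_bot; rewrite //= nth_mapS S2 Hj'; lia.
  have -> : topple_bot j' (topple_top i c) = topple_top i (topple_bot j' c) by config_eq.
  by apply: topple_step_top; rewrite //= nth_mapS S1 Hi; lia.
- right; exists (topple_top i' (topple_bot j c)).
    by apply: topple_step_top; rewrite //= nth_mapS S1 Hi'; lia.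
  have -> : topple_top i' (topple_bot j c) = topple_bot j (topple_top i' c) by config_eq.
  by apply: topple_step_bot; rewrite //= nth_mapS S2 Hj; lia.
- case: (eqVneq j j') => [<-|Hne]; [by left | right].
  exists (topple_bot j' (topple_bot j c)).
    by apply: topple_step_bot; rewrite //= nth_set_nth0 eq_sym (negbTE Hne).
  have -> : topple_bot j' (topple_bot j c) = topple_bot j (topple_bot j' c) by config_eq.
  by apply: topple_step_bot; rewrite //= nth_set_nth0 (negbTE Hne).
Qed.

Lemma topple_confluent c c1 c2 : sized c -> rtc (topple_step m n) c c1 -> stable m n c1 ->
  rtc (topple_step m n) c c2 -> rtc (topple_step m n) c2 c1.
Proof.
move=> Sc H1 S1; apply: rtc_normal_confluent Sc H1 _ => //.
- exact: sized_topple.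
- exact: topple_diamond.
- by move=> c'; apply: stable_no_topple.
Qed.

(* Non-sink vertices: [inl i] is the top vertex v^t_(i+1), [inr j] the bottom vertex v^b_(j+1). *)
Definition add_grain (v : nat + nat) (c : config) : config :=
  match v with inl i => add_top i c | inr j => add_bot j c end.
Definition valid_vertex (v : nat + nat) : bool :=
  match v with inl i => i < m | inr j => j < n end.
Definition add_grains (vs : seq (nat + nat)) (c : config) : config :=
  foldl (fun c v => add_grain v c) c vs.

Definition top_vertices : seq (nat + nat) := [seq inl i | i <- iota 0 m].
Definition bot_vertices : seq (nat + nat) := [seq inr j | j <- iota 0 n].

(* The sink topples: one grain on each bottom vertex. *)
Definition fire_sink (c : config) : config := add_grains bot_vertices c.

Lemma valid_top_vertices : all valid_vertex top_vertices.
Proof. by apply/allP => v /mapP[i]; rewrite mem_iota => /andP[_ Hi] ->. Qed.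

Lemma valid_bot_vertices : all valid_vertex bot_vertices.
Proof. by apply/allP => v /mapP[j]; rewrite mem_iota => /andP[_ Hj] ->. Qed.

Lemma add_grains_cat vs us c : add_grains (vs ++ us) c = add_grains us (add_grains vs c).
Proof. exact: foldl_cat. Qed.

Lemma add_grainsE vs c : sized c -> all valid_vertex vs -> add_grains vs c =
  (mkseq (fun i => nth 0 c.1 i + count_mem (inl i) vs) m,
   mkseq (fun j => nth 0 c.2 j + count_mem (inr j) vs) n).
Proof.
elim: vs c => [|v vs IH] [t b] [/= S1 S2].
  by move=> _; rewrite -{1}S1 -{1}S2 -{1}(mkseq_nth 0 t) -{1}(mkseq_nth 0 b);
    congr pair; apply: eq_mkseq => i; rewrite addn0.
case: v => k /= /andP[Hk Hvs]; rewrite IH //=.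
- by congr pair; apply: eq_mkseq => i; rewrite nth_set_nth0; case: eqP => [->|/eqP Hi] /=;
    rewrite ?eqxx ?inl_eqE 1?eq_sym ?(negbTE Hi); lia.
- by split; rewrite /= ?size_set_nth; lia.
- by congr pair; apply: eq_mkseq => j; rewrite nth_set_nth0; case: eqP => [->|/eqP Hj] /=;
    rewrite ?eqxx ?inr_eqE 1?eq_sym ?(negbTE Hj); lia.
- by split; rewrite /= ?size_set_nth; lia.
Qed.

Lemma sized_add_grains vs c : sized c -> all valid_vertex vs -> sized (add_grains vs c).
Proof. by move=> Sc Hvs; rewrite add_grainsE //; split; rewrite /= size_mkseq. Qed.

Lemma sized_add_grain v c : sized c -> valid_vertex v -> sized (add_grain v c).
Proof. by move=> Sc Hv; apply: (@sized_add_grains [:: v]); rewrite /= ?Hv. Qed.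

Lemma add_grainsC vs us c : sized c -> all valid_vertex vs -> all valid_vertex us ->
  add_grains us (add_grains vs c) = add_grains vs (add_grains us c).
Proof.
move=> Sc Hvs Hus; rewrite -!add_grains_cat !add_grainsE ?all_cat ?Hvs ?Hus //.
by congr pair; apply: eq_mkseq => i; rewrite !count_cat; lia.
Qed.

Lemma count_top_vertices v :
  count_mem v top_vertices = if v is inl i then i < m else false.
Proof.
have inl_inj : injective (@inl nat nat) by move=> x y [].
rewrite count_uniq_mem ?map_inj_uniq ?iota_uniq //.
case: v => k; rewrite /top_vertices; last by elim: (iota 0 m) => // x s IH; rewrite /= in_cons IH.
by rewrite mem_map // mem_iota.
Qed.

Lemma count_bot_vertices v :
  count_mem v bot_vertices = if v is inr j then j < n else false.
Proof.
have inr_inj : injective (@inr nat nat) by move=> x y [].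
rewrite count_uniq_mem ?map_inj_uniq ?iota_uniq //.
case: v => k; rewrite /bot_vertices; first by elim: (iota 0 n) => // x s IH; rewrite /= in_cons IH.
by rewrite mem_map // mem_iota.
Qed.

Lemma topple_add_grain v c c' : sized c -> valid_vertex v -> topple_step m n c c' ->
  topple_step m n (add_grain v c) (add_grain v c').
Proof.
case=> S1 S2; case: v => k /= Hk /topple_stepP[[i [Hi Hni ->]]|[j [Hj Hnj ->]]].
- have -> : add_top k (topple_top i c) = topple_top i (add_top k c) by config_eq.
  by apply: topple_step_top; rewrite //= nth_set_nth0; case: eqP => [<-|]; lia.
- have -> : add_top k (topple_bot j c) = topple_bot j (add_top k c) by config_eq.
  exact: topple_step_bot.
- have -> : add_bot k (topple_top i c) = topple_top i (add_bot k c) by config_eq.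
  exact: topple_step_top.
- have -> : add_bot k (topple_bot j c) = topple_bot j (add_bot k c) by config_eq.
  by apply: topple_step_bot; rewrite //= nth_set_nth0; case: eqP => [<-|]; lia.
Qed.

Lemma rtc_topple_add_grains vs c c' : sized c -> all valid_vertex vs ->
  rtc (topple_step m n) c c' -> rtc (topple_step m n) (add_grains vs c) (add_grains vs c').
Proof.
elim: vs c c' => //= v vs IH c c' Sc /andP[Hv Hvs] H; apply: IH => //.
  exact: sized_add_grain.
elim: H Sc => [a _|a b d Hab _ IH' Sa]; first exact: rtc_refl.
exact: rtc_step (topple_add_grain Sa Hv Hab) (IH' (sized_topple Sa Hab)).
Qed.

(* A top toppling moves [n] grains down; a bottom toppling moves [m] grains up and loses one. *)
Definition topple_measure (c : config) := m.+1 * (sumn c.1 + sumn c.2) + sumn c.1.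

Lemma topple_measure_decr c c' : 0 < n -> sized c -> topple_step m n c c' ->
  topple_measure c' < topple_measure c.
Proof.
move=> n_gt0 [S1 S2] /topple_stepP[[i [Hi Hni ->]]|[j [Hj Hnj ->]]];
  rewrite /topple_measure /= sumn_mapS sumn_set_nth_ltn ?S1 ?S2 //.
- by have := nth_le_sumn c.1 i; nia.
- by have := nth_le_sumn c.2 j; nia.
Qed.

Lemma stable_or_topple c : sized c -> stable m n c \/ exists c', topple_step m n c c'.
Proof.
case=> S1 S2; case Ht: (all (fun x => x < n) c.1); case Hb: (all (fun x => x < m.+1) c.2).
- by left.
- move/negbT: Hb; rewrite -has_predC => /(has_nthP 0)[j Hj /= Hnj].
  by right; exists (topple_bot j c); apply: topple_step_bot; rewrite -?S2 //; lia.
all: move/negbT: Ht; rewrite -has_predC => /(has_nthP 0)[i Hi /= Hni].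
all: by right; exists (topple_top i c); apply: topple_step_top; rewrite -?S1 //; lia.
Qed.

Lemma stabilise c : 0 < n -> sized c -> exists2 c', rtc (topple_step m n) c c' & stable m n c'.
Proof.
move=> n_gt0; move: {2}(topple_measure c) (leqnn (topple_measure c)) => N.
elim: N c => [|N IH] c HN Sc; case: (stable_or_topple Sc) => [Stc|[c' Hcc']].
- by exists c => //; apply: rtc_refl.
- by have := topple_measure_decr n_gt0 Sc Hcc'; lia.
- by exists c => //; apply: rtc_refl.
have [|d Hc'd Sd] := IH c' _ (sized_topple Sc Hcc').
  by have := topple_measure_decr n_gt0 Sc Hcc'; lia.
by exists d => //; apply: rtc_step Hcc' Hc'd.
Qed.

Lemma chain_step_add_grain s v s' : stable m n s -> valid_vertex v ->
  rtc (topple_step m n) (add_grain v s) s' -> stable m n s' -> chain_step m n s s'.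
Proof. by move=> Ss; case: v => k Hk H Ss'; split=> //; [left | right]; exists k. Qed.

(* Stabilising after each added grain, or only once at the end, gives the same result. *)
Lemma chain_add_grains vs s c : 0 < n -> stable m n s -> all valid_vertex vs ->
  rtc (topple_step m n) (add_grains vs s) c -> stable m n c -> rtc (chain_step m n) s c.
Proof.
move=> n_gt0; elim: vs s => [|v vs IH] s Ss /=.
  by move=> _ H Sc; rewrite (rtc_stable_eq Ss H); apply: rtc_refl.
move=> /andP[Hv Hvs] H Sc.
have Sv : sized (add_grain v s) by apply: sized_add_grain; first by case: Ss.
have [s1 Hs1 Ss1] := stabilise n_gt0 Sv.
apply: rtc_step (chain_step_add_grain Ss Hv Hs1 Ss1) (IH _ Ss1 Hvs _ Sc).
exact: topple_confluent (sized_add_grains Sv Hvs) H Sc (rtc_topple_add_grains Sv Hvs Hs1).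
Qed.

Definition max_stable : config := (nseq m n.-1, nseq n m).

Lemma stable_max_stable : 0 < n -> stable m n max_stable.
Proof.
move=> n_gt0; split; rewrite /= ?size_nseq ?all_nseq //=; apply/orP; right => //.
by rewrite prednK.
Qed.

Lemma add_grains_max_stable c : stable m n c ->
  exists2 vs, all valid_vertex vs & add_grains vs c = max_stable.
Proof.
case=> S1 S2 Sc1 Sc2.
set vs := flatten [seq nseq (n.-1 - nth 0 c.1 i) (inl i) | i <- iota 0 m] ++
          flatten [seq nseq (m - nth 0 c.2 j) (inr j) | j <- iota 0 n].
have Hvs : all valid_vertex vs.
  by rewrite all_cat; apply/andP; split; apply/allP => v /flattenP[s /mapP[i]];
    rewrite mem_iota => Hi -> /nseqP[-> _] /=; lia.
have sum0 (s : seq nat) (f : nat -> nat) : sumn [seq 0 * f i | i <- s] = 0 by elim: s.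
exists vs => //; rewrite add_grainsE // /max_stable; congr pair;
  apply: (@eq_from_nth _ 0); rewrite ?size_mkseq ?size_nseq // => k Hk;
  rewrite nth_mkseq // nth_nseq Hk count_cat !count_flatten_nseq /= sum0 ?sumn_iota_eq Hk.
- by move/(all_nthP 0): Sc1 => /(_ k); rewrite S1 => /(_ Hk); lia.
- by move/(all_nthP 0): Sc2 => /(_ k); rewrite S2 => /(_ Hk); lia.
Qed.

Lemma chain_max_stable c : 0 < n -> stable m n c -> rtc (chain_step m n) c max_stable.
Proof.
move=> n_gt0 Sc; have [vs Hvs Evs] := add_grains_max_stable Sc.
by apply: chain_add_grains Hvs _ (stable_max_stable n_gt0); rewrite // Evs; apply: rtc_refl.
Qed.

Section Burning.
Variable c : config.
Hypothesis c_sized : sized c.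

(* The configuration reached from [fire_sink c] once exactly the top vertices in [St]
   and the bottom vertices in [Sb] have toppled, each once. *)
Definition burnt (St Sb : pred nat) : config :=
  (mkseq (fun i => nth 0 c.1 i + count Sb (iota 0 n) - (if St i then n else 0)) m,
   mkseq (fun j => nth 0 c.2 j + 1 + count St (iota 0 m) - (if Sb j then m.+1 else 0)) n).

Lemma burnt_none : burnt pred0 pred0 = fire_sink c.
Proof.
rewrite /burnt /fire_sink add_grainsE ?valid_bot_vertices // !count_pred0.
by congr pair; apply: (@eq_from_nth _ 0); rewrite ?size_mkseq // => k Hk;
  rewrite !nth_mkseq // count_bot_vertices /=; lia.
Qed.

Lemma burnt_all : burnt predT predT = c.
Proof.
case: c_sized => S1 S2; rewrite /burnt !count_predT !size_iota [RHS]surjective_pairing.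
by congr pair; apply: (@eq_from_nth _ 0); rewrite ?size_mkseq ?S1 ?S2 // => k Hk;
  rewrite nth_mkseq //=; lia.
Qed.

Lemma burnt_eq St Sb St' Sb' : {in gtn m, St =1 St'} -> {in gtn n, Sb =1 Sb'} ->
  burnt St Sb = burnt St' Sb'.
Proof.
move=> Et Eb; have count_eq N P P' : {in gtn N, P =1 P'} -> count P (iota 0 N) = count P' (iota 0 N).
  by move=> E; apply: eq_in_count => i; rewrite mem_iota => /andP[_ Hi]; apply: E.
rewrite /burnt (count_eq _ _ _ Et) (count_eq _ _ _ Eb).
by congr pair; apply: (@eq_from_nth _ 0); rewrite ?size_mkseq // => k Hk;
  rewrite !nth_mkseq // ?Et ?Eb.
Qed.

(* Every vertex that has burnt had enough grains to topple when it did. *)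
Definition burn_inv (St Sb : pred nat) :=
  (forall i, i < m -> St i -> n <= nth 0 c.1 i + count Sb (iota 0 n)) /\
  (forall j, j < n -> Sb j -> m.+1 <= nth 0 c.2 j + 1 + count St (iota 0 m)).

Definition unburnt (St Sb : pred nat) :=
  count (predC St) (iota 0 m) + count (predC Sb) (iota 0 n).

Lemma unburnt_add_top St Sb i : i < m -> ~~ St i ->
  unburnt (predU1 i St) Sb < unburnt St Sb.
Proof.
move=> Hi HSi; rewrite /unburnt.
have := count_predC (predU1 i St) (iota 0 m); have := count_predC St (iota 0 m).
rewrite count_predU1 ?iota_uniq ?mem_iota // HSi !size_iota.
by set u := count (predC (predU1 i St)) _; lia.
Qed.

Lemma unburnt_add_bot St Sb j : j < n -> ~~ Sb j ->
  unburnt St (predU1 j Sb) < unburnt St Sb.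
Proof.
move=> Hj HSj; rewrite /unburnt.
have := count_predC (predU1 j Sb) (iota 0 n); have := count_predC Sb (iota 0 n).
rewrite count_predU1 ?iota_uniq ?mem_iota // HSj !size_iota.
by set u := count (predC (predU1 j Sb)) _; lia.
Qed.

Lemma burnt_topple_top St Sb i : burn_inv St Sb -> i < m -> ~~ St i ->
  n <= nth 0 c.1 i + count Sb (iota 0 n) ->
  topple_top i (burnt St Sb) = burnt (predU1 i St) Sb.
Proof.
move=> [_ Inv] Hi HSi Hr; rewrite /topple_top /burnt /=.
rewrite count_predU1 ?iota_uniq ?mem_iota // HSi; congr pair.
- apply: (@eq_from_nth _ 0); rewrite ?size_set_nth !size_mkseq; first lia.
  move=> k Hk; rewrite nth_set_nth0 !nth_mkseq /=; try lia.
  by case: eqP => [->|]; rewrite ?eqxx ?(negbTE HSi) /=; lia.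
- apply: (@eq_from_nth _ 0); rewrite size_map !size_mkseq // => k Hk.
  rewrite nth_mapS size_mkseq Hk !nth_mkseq //.
  by case Hb: (Sb k); [have := Inv k Hk Hb | ]; lia.
Qed.

Lemma burnt_topple_bot St Sb j : burn_inv St Sb -> j < n -> ~~ Sb j ->
  m.+1 <= nth 0 c.2 j + 1 + count St (iota 0 m) ->
  topple_bot j (burnt St Sb) = burnt St (predU1 j Sb).
Proof.
move=> [Inv _] Hj HSj Hr; rewrite /topple_bot /burnt /=.
rewrite count_predU1 ?iota_uniq ?mem_iota // HSj; congr pair.
- apply: (@eq_from_nth _ 0); rewrite size_map !size_mkseq // => k Hk.
  rewrite nth_mapS size_mkseq Hk !nth_mkseq //.
  by case Ht: (St k); [have := Inv k Hk Ht | ]; lia.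
- apply: (@eq_from_nth _ 0); rewrite ?size_set_nth !size_mkseq; first lia.
  move=> k Hk; rewrite nth_set_nth0 !nth_mkseq /=; try lia.
  by case: eqP => [->|]; rewrite ?eqxx ?(negbTE HSj) /=; lia.
Qed.

Lemma burnt_stuck St Sb : 0 < unburnt St Sb ->
  (forall i, i < m -> ~~ St i -> nth 0 c.1 i + count Sb (iota 0 n) < n) ->
  (forall j, j < n -> ~~ Sb j -> nth 0 c.2 j + 1 + count St (iota 0 m) < m.+1) ->
  fsc c (predC St) (predC Sb).
Proof.
case: c_sized => S1 S2 Hpos Ht Hb; rewrite /fsc S1 S2; split.
- by rewrite !has_count; move: Hpos; rewrite /unburnt; lia.
- move=> i Hi HSi; have := Ht i Hi HSi.
  by have := count_predC Sb (iota 0 n); rewrite size_iota; lia.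
- move=> j Hj HSj; have := Hb j Hj HSj.
  by have := count_predC St (iota 0 m); rewrite size_iota; lia.
Qed.

Lemma burnt_progress St Sb : fsc_free c -> burn_inv St Sb -> 0 < unburnt St Sb ->
  exists St', exists Sb', [/\ topple_step m n (burnt St Sb) (burnt St' Sb'),
    burn_inv St' Sb' & unburnt St' Sb' < unburnt St Sb].
Proof.
move=> free [Inv1 Inv2] Hpos.
have count_grow N P k : count P (iota 0 N) <= count (predU1 k P) (iota 0 N).
  by apply: sub_count => x /= ->; rewrite orbT.
case Ht: (has (fun i => ~~ St i && (n <= nth 0 c.1 i + count Sb (iota 0 n))) (iota 0 m)).
  move/hasP: Ht => [i]; rewrite mem_iota add0n => /andP[_ Hi] /andP[HSi Hr].
  exists (predU1 i St), Sb; rewrite -burnt_topple_top //; split.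
  - by apply: topple_step_top; rewrite //= nth_mkseq // (negbTE HSi); lia.
  - split=> [k Hk /predU1P[->|] //|j Hj HSj]; first exact: Inv1.
    have := Inv2 j Hj HSj; have := count_grow m St i.
    by set u := count (predU1 i St) _; lia.
  - exact: unburnt_add_top.
case Hb: (has (fun j => ~~ Sb j && (m.+1 <= nth 0 c.2 j + 1 + count St (iota 0 m))) (iota 0 n)).
  move/hasP: Hb => [j]; rewrite mem_iota add0n => /andP[_ Hj] /andP[HSj Hr].
  exists St, (predU1 j Sb); rewrite -burnt_topple_bot //; split.
  - by apply: topple_step_bot; rewrite //= nth_mkseq // (negbTE HSj); lia.
  - split=> [i Hi HSi|k Hk /predU1P[->|] //]; last exact: Inv2.
    have := Inv1 i Hi HSi; have := count_grow n Sb j.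
    by set u := count (predU1 j Sb) _; lia.
  - exact: unburnt_add_bot.
case: (free (predC St) (predC Sb)); apply: burnt_stuck => // [i Hi HSi|j Hj HSj].
- by move/hasPn: Ht => /(_ i); rewrite mem_iota add0n Hi HSi /= => /(_ isT); lia.
- by move/hasPn: Hb => /(_ j); rewrite mem_iota add0n Hj HSj /= => /(_ isT); lia.
Qed.

Lemma burnt_unburnt0 St Sb : unburnt St Sb = 0 -> burnt St Sb = burnt predT predT.
Proof.
have all_in N (P : pred nat) : count (predC P) (iota 0 N) = 0 -> {in gtn N, P =1 predT}.
  move=> H0 k Hk; apply/negPn/negP => HPk; move/eqP: H0; apply/negP; rewrite -lt0n -has_count.
  by apply/hasP; exists k; rewrite ?mem_iota.
by rewrite /unburnt => H0; apply: burnt_eq; apply: all_in; lia.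
Qed.

Lemma burning : fsc_free c -> rtc (topple_step m n) (fire_sink c) c.
Proof.
move=> free; rewrite -burnt_none -burnt_all.
suff H N St Sb : unburnt St Sb <= N -> burn_inv St Sb ->
    rtc (topple_step m n) (burnt St Sb) (burnt predT predT) by exact: H (leqnn _) _.
elim: N St Sb => [|N IH] St Sb HN Inv; case: (posnP (unburnt St Sb)) => [H0|Hpos].
- by rewrite burnt_unburnt0 //; apply: rtc_refl.
- by move: HN Hpos; rewrite leqn0 => /eqP ->.
- by rewrite burnt_unburnt0 //; apply: rtc_refl.
have [St' [Sb' [Hstep Inv' Hlt]]] := burnt_progress free Inv Hpos.
by apply: rtc_step Hstep (IH _ _ _ Inv'); lia.
Qed.

End Burning.

Lemma topple_top_nseq x i : sized x -> i < m ->
  topple_top i (add_grains (nseq n (inl i)) x) = fire_sink x.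
Proof.
move=> Sx Hi; have [S1 S2] := Sx.
have Vi : all valid_vertex (nseq n (inl i)) by rewrite all_nseq /= Hi orbT.
rewrite /fire_sink !add_grainsE ?valid_bot_vertices // /topple_top /=; congr pair.
- apply: (@eq_from_nth _ 0); rewrite ?size_set_nth !size_mkseq; first lia.
  move=> k Hk; rewrite nth_set_nth0 !nth_mkseq ?count_nseq ?count_bot_vertices /=; try lia.
  by case: eqP => [->|/eqP Hki]; rewrite ?nth_mkseq ?count_nseq ?eqxx /= ?inl_eqE 1?eq_sym ?(negbTE Hki); lia.
- apply: (@eq_from_nth _ 0); rewrite size_map !size_mkseq // => k Hk.
  by rewrite nth_mapS size_mkseq Hk !nth_mkseq // count_nseq count_bot_vertices /= Hk; lia.
Qed.

Lemma topple_bot_nseq x j : sized x -> j < n ->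
  topple_bot j (add_grains (nseq m.+1 (inr j)) x) = add_grains top_vertices x.
Proof.
move=> Sx Hj; have [S1 S2] := Sx.
have Vj : all valid_vertex (nseq m.+1 (inr j)) by rewrite all_nseq /= Hj.
rewrite !add_grainsE ?valid_top_vertices // /topple_bot /=; congr pair.
- apply: (@eq_from_nth _ 0); rewrite size_map !size_mkseq // => k Hk.
  by rewrite nth_mapS size_mkseq Hk !nth_mkseq // count_nseq count_top_vertices /= Hk; lia.
- apply: (@eq_from_nth _ 0); rewrite ?size_set_nth !size_mkseq; first lia.
  move=> k Hk; rewrite nth_set_nth0 !nth_mkseq ?count_nseq ?count_top_vertices /=; try lia.
  by case: eqP => [->|/eqP Hkj]; rewrite ?nth_mkseq ?count_nseq ?eqxx /= ?inr_eqE 1?eq_sym ?(negbTE Hkj); lia.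
Qed.

Definition add_reaches (x c : config) :=
  exists2 vs, all valid_vertex vs & rtc (topple_step m n) (add_grains vs x) c.

Section AddReaches.
Variable c : config.
Hypothesis n_gt0 : 0 < n.
Hypothesis burn_c : rtc (topple_step m n) (fire_sink c) c.

Lemma add_reaches_topple x y : sized x -> topple_step m n x y ->
  add_reaches y c -> add_reaches x c.
Proof.
move=> Sx Hxy [vs Hvs Hy]; exists vs => //.
exact: rtc_trans (rtc_topple_add_grains Sx Hvs (rtc1 Hxy)) Hy.
Qed.

Lemma add_reaches_of_add_grains x vs : all valid_vertex vs ->
  add_reaches (add_grains vs x) c -> add_reaches x c.
Proof.
by move=> Hvs [us Hus H]; exists (vs ++ us); rewrite ?all_cat ?Hvs // add_grains_cat.
Qed.

Lemma add_reaches_fire_sink x : sized x -> add_reaches x c -> add_reaches (fire_sink x) c.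
Proof.
move=> Sx [vs Hvs H]; exists vs => //; apply: rtc_trans burn_c.
rewrite /fire_sink add_grainsC ?valid_bot_vertices //.
exact: rtc_topple_add_grains (sized_add_grains Sx Hvs) valid_bot_vertices H.
Qed.

(* Topping a top vertex up to [n] extra grains and toppling it fires the sink; topping a
   bottom vertex up to [m + 1] extra grains and toppling it adds a grain to every top vertex. *)
Lemma add_reaches_top x i : sized x -> i < m -> add_reaches x c -> add_reaches (add_top i x) c.
Proof.
move=> Sx Hi Hx; apply: (@add_reaches_of_add_grains _ (nseq n.-1 (inl i))).
  by rewrite all_nseq /= Hi orbT.
have -> : add_grains (nseq n.-1 (inl i)) (add_top i x) = add_grains (nseq n (inl i)) x.
  by rewrite -{2}(prednK n_gt0).
have Vi : all valid_vertex (nseq n (inl i)) by rewrite all_nseq /= Hi orbT.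
apply: (add_reaches_topple (sized_add_grains Sx Vi)) (add_reaches_fire_sink Sx Hx).
rewrite -(topple_top_nseq Sx Hi); apply: topple_step_top => //.
by rewrite add_grainsE //= nth_mkseq // count_nseq /= eqxx; lia.
Qed.

Lemma add_reaches_bot x j : sized x -> j < n -> add_reaches x c -> add_reaches (add_bot j x) c.
Proof.
move=> Sx Hj Hx; apply: (@add_reaches_of_add_grains _ (nseq m (inr j))).
  by rewrite all_nseq /= Hj orbT.
have Vj : all valid_vertex (nseq m.+1 (inr j)) by rewrite all_nseq /= Hj.
apply: (@add_reaches_topple _ (add_grains top_vertices x) (sized_add_grains Sx Vj)).
  rewrite -(topple_bot_nseq Sx Hj); apply: topple_step_bot => //.
  by rewrite add_grainsE //= nth_mkseq // count_nseq /= eqxx; lia.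
have : all (gtn m) (iota 0 m) by apply/allP => i; rewrite mem_iota.
rewrite /top_vertices; elim: (iota 0 m) x Sx Hx => //= i l IH x Sx Hx /andP[Hi Hl].
exact: IH (sized_add_grain (v := inl i) Sx Hi) (add_reaches_top Sx Hi Hx) Hl.
Qed.

Lemma add_reaches_add_grains x vs : sized x -> all valid_vertex vs ->
  add_reaches x c -> add_reaches (add_grains vs x) c.
Proof.
elim: vs x => //= v vs IH x Sx /andP[Hv Hvs] Hx; apply: IH => //.
  exact: sized_add_grain.
by case: v Hv => k Hk; [apply: add_reaches_top | apply: add_reaches_bot].
Qed.

End AddReaches.

Lemma fsc_add_grain x v At Ab : sized x -> valid_vertex v ->
  fsc (add_grain v x) At Ab -> fsc x At Ab.
Proof.
case=> S1 S2; case: v => k /= Hk [/=]; rewrite ?size_set_nth ?S1 ?S2 ?(maxn_idPr Hk) => H1 H2 H3.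
- split; rewrite ?S1 ?S2 // => i Hi HA; have := H2 i Hi HA.
  by rewrite nth_set_nth0; case: eqP => [->|]; lia.
- split; rewrite ?S1 ?S2 // => j Hj HA; have := H3 j Hj HA.
  by rewrite nth_set_nth0; case: eqP => [->|]; lia.
Qed.

(* If the toppled vertex belongs to the forbidden set, removing it leaves a forbidden set
   of the configuration before the toppling. *)
Lemma fsc_topple_top x i At Ab : sized x -> i < m -> n <= nth 0 x.1 i ->
  fsc (topple_top i x) At Ab -> exists At', exists Ab', fsc x At' Ab'.
Proof.
case=> S1 S2 Hi Hni; rewrite /fsc /topple_top /= size_set_nth S1 (maxn_idPr Hi) size_map S2.
case=> H1 H2 H3; case HAi: (At i).
- exists (predD1 At i), Ab; split; rewrite ?S1 ?S2.
  + by apply/orP; right; rewrite has_count; have := H2 i Hi HAi; lia.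
  + move=> k Hk /andP[Hki HAk]; have := H2 k Hk HAk; rewrite nth_set_nth0 (negbTE Hki); lia.
  + move=> j Hj HB; have := H3 j Hj HB; rewrite nth_mapS S2 Hj.
    have := @count_predD1 (iota 0 m) At i (iota_uniq _ _); rewrite mem_iota HAi Hi => /(_ isT).
    by set u := count (predD1 At i) _; lia.
- exists At, Ab; split; rewrite ?S1 ?S2 //.
  + move=> k Hk HAk; have := H2 k Hk HAk; rewrite nth_set_nth0.
    by case: eqP => [Eki|_]; [rewrite Eki HAi in HAk | lia].
  + by move=> j Hj HB; have := H3 j Hj HB; rewrite nth_mapS S2 Hj; lia.
Qed.

Lemma fsc_topple_bot x j At Ab : sized x -> j < n -> m.+1 <= nth 0 x.2 j ->
  fsc (topple_bot j x) At Ab -> exists At', exists Ab', fsc x At' Ab'.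
Proof.
case=> S1 S2 Hj Hnj; rewrite /fsc /topple_bot /= size_set_nth S2 (maxn_idPr Hj) size_map S1.
case=> H1 H2 H3; case HBj: (Ab j).
- exists At, (predD1 Ab j); split; rewrite ?S1 ?S2.
  + by apply/orP; left; rewrite has_count; have := H3 j Hj HBj; lia.
  + move=> i Hi HA; have := H2 i Hi HA; rewrite nth_mapS S1 Hi.
    have := @count_predD1 (iota 0 n) Ab j (iota_uniq _ _); rewrite mem_iota HBj Hj => /(_ isT).
    by set u := count (predD1 Ab j) _; lia.
  + move=> k Hk /andP[Hkj HBk]; have := H3 k Hk HBk; rewrite nth_set_nth0 (negbTE Hkj); lia.
- exists At, Ab; split; rewrite ?S1 ?S2 //.
  + by move=> i Hi HA; have := H2 i Hi HA; rewrite nth_mapS S1 Hi; lia.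
  + move=> k Hk HBk; have := H3 k Hk HBk; rewrite nth_set_nth0.
    by case: eqP => [Ekj|_]; [rewrite Ekj HBj in HBk | lia].
Qed.

Lemma fsc_free_topple x y : sized x -> topple_step m n x y -> fsc_free x -> fsc_free y.
Proof.
move=> Sx /topple_stepP[[i [Hi Hni ->]]|[j [Hj Hnj ->]]] free At Ab Hy.
- by have [At' [Ab' Hx]] := fsc_topple_top Sx Hi Hni Hy; apply: free Hx.
- by have [At' [Ab' Hx]] := fsc_topple_bot Sx Hj Hnj Hy; apply: free Hx.
Qed.

Lemma fsc_free_rtc_topple x y : sized x -> rtc (topple_step m n) x y -> fsc_free x -> fsc_free y.
Proof.
move=> Sx H; elim: H Sx => // a b d Hab _ IH Sa free.
exact: IH (sized_topple Sa Hab) (fsc_free_topple Sa Hab free).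
Qed.

Lemma fsc_free_add_grain x v : sized x -> valid_vertex v -> fsc_free x -> fsc_free (add_grain v x).
Proof. by move=> Sx Hv free At Ab /(fsc_add_grain Sx Hv); apply: free. Qed.

Lemma fsc_free_chain x y : rtc (chain_step m n) x y -> fsc_free x -> fsc_free y.
Proof.
elim=> // a b d [[S1 S2 _ _] Hab] _ IH free_a; apply: IH; have Sa : sized a by [].
case: Hab => -[k Hk [H _]].
- exact: fsc_free_rtc_topple (sized_add_grain (v := inl k) Sa Hk) H
    (fsc_free_add_grain (v := inl k) Sa Hk free_a).
- exact: fsc_free_rtc_topple (sized_add_grain (v := inr k) Sa Hk) H
    (fsc_free_add_grain (v := inr k) Sa Hk free_a).
Qed.

Lemma fsc_free_max_stable : fsc_free max_stable.
Proof.
move=> At Ab [/=]; rewrite !size_nseq => nonempty Htop Hbot.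
have noAb : ~~ has Ab (iota 0 n).
  apply/hasP => -[j]; rewrite mem_iota => /andP[_ Hj] /(Hbot _ Hj); rewrite nth_nseq Hj.
  by have := count_size At (iota 0 m); rewrite size_iota; lia.
move: nonempty; rewrite (negbTE noAb) orbF => /hasP[i]; rewrite mem_iota => /andP[_ Hi].
by move/(Htop _ Hi); move: noAb; rewrite has_count; lia.
Qed.

Lemma chain_stable x y : rtc (chain_step m n) x y -> stable m n x -> stable m n y.
Proof. by elim=> // a b d [_ [] [k _ [_ Sb]]] _ IH _; apply: IH. Qed.

Lemma recurrent_fsc_free c : 0 < n -> recurrent m n c -> fsc_free c.
Proof.
move=> n_gt0 [Sc rec]; apply: fsc_free_chain fsc_free_max_stable.
exact: rec (chain_max_stable n_gt0 Sc).
Qed.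

(* Every stable configuration reaches [max_stable] by adding grains, and [max_stable]
   reaches [c] by adding grains and toppling. *)
Lemma fsc_free_recurrent c : 0 < n -> stable m n c -> fsc_free c -> recurrent m n c.
Proof.
move=> n_gt0 Sc free; split=> // c' /chain_stable/(_ Sc) Sc'.
have Szc : sized c by case: Sc.
have [vs Hvs Evs] := add_grains_max_stable Sc.
have [us Hus Hmax] : add_reaches max_stable c.
  rewrite -Evs; apply: add_reaches_add_grains => //; first exact: burning.
  by exists [::] => //; apply: rtc_refl.
have [vs' Hvs' Evs'] := add_grains_max_stable Sc'.
by apply: (@chain_add_grains (vs' ++ us)); rewrite ?all_cat ?Hvs' // add_grains_cat Evs'.
Qed.

End Sandpile.

Theorem theorem4p14 (m n : nat) : 1 <= n ->
  (forall w, motz m (n - 1) w ->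
     [/\ sorted_config (cfg_of m w), recurrent m n (cfg_of m w),
         parallelogram m n (Phi m n (cfg_of m w))
       & Xi (Phi m n (cfg_of m w)) = w])
  /\ (forall w1 w2, motz m (n - 1) w1 -> motz m (n - 1) w2 ->
        cfg_of m w1 = cfg_of m w2 -> w1 = w2)
  /\ (forall c, sorted_config c -> recurrent m n c ->
        exists w, motz m (n - 1) w /\ cfg_of m w = c).
Proof.
move=> n_gt0; split; [|split].
- move=> w Hw; split.
  + exact: sorted_cfg_of Hw.
  + exact: fsc_free_recurrent n_gt0 (stable_cfg_of n_gt0 Hw) (fsc_free_cfg_of n_gt0 Hw).
  + exact: parallelogram_Phi_cfg_of n_gt0 Hw.
  + exact: Xi_Phi_cfg_of n_gt0 Hw.
- move=> w1 w2 Hw1 Hw2 E.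
  by rewrite -(Xi_Phi_cfg_of n_gt0 Hw1) -(Xi_Phi_cfg_of n_gt0 Hw2) E.
- move=> c sorted_c rec_c.
  exact: cfg_of_surj n_gt0 sorted_c (proj1 rec_c) (recurrent_fsc_free n_gt0 rec_c).
Qed.
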